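(* Let $\mathcal{Q}\subset\mathbb{R}^2$ be a convex polygon and $Q\in\mathcal{Q}$ one of its vertices. Let $\delta>0$ and $\bar Q\in\mathbb{R}^2$ with $\|Q-\bar Q\|<\delta$. Suppose there is $r>0$ with $\|Q\|>r$ such that \[ \frac{\langle Q,Q-P_j\rangle}{\|Q\|\,\|Q-P_j\|}\ge\frac{\delta}{r} \] for all other vertices $P_j\in\mathcal{Q}\setminus\{Q\}$. Then $Q$ is $\delta$-locally maximally distant with respect to $\bar Q$.
   Context: A convex polygon is a finite set of points of $\mathbb{R}^2$, not all on one line, in convex position (its points are its vertices). For a vertex $Q$ of a convex polygon $\mathcal{Q}$ and $\bar Q\in\mathbb{R}^2$ with $\|Q-\bar Q\|<\delta$, $Q$ is called $\delta$-locally maximally distant with respect to $\bar Q$ if $\|Q\|>\|A\|$ for every $A$ in the intersection of the open disk of radius $\delta$ centered at $\bar Q$ with the interior of the convex hull of $\mathcal{Q}$. *)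

From mathcomp Require Import all_boot all_order all_algebra.
From mathcomp Require Import reals.
Set Implicit Arguments. Unset Strict Implicit. Unset Printing Implicit Defensive.
Import Order.TTheory GRing.Theory Num.Theory.
Local Open Scope ring_scope.

Section Plane.
Variable R : realType.

Definition pt := (R * R)%type.

Definition psub (p q : pt) : pt := (p.1 - q.1, p.2 - q.2).
Definition dot (p q : pt) : R := p.1 * q.1 + p.2 * q.2.
Definition enorm (p : pt) : R := Num.sqrt (dot p p).
Definition cross (p q : pt) : R := p.1 * q.2 - p.2 * q.1.

Definition in_conv_hull (s : seq pt) (x : pt) : Prop :=
  exists w : nat -> R,
    (forall i, (i < size s)%N -> 0 <= w i) /\
    \sum_(i < size s) w i = 1 /\
    x.1 = \sum_(i < size s) w i * (nth x s i).1 /\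
    x.2 = \sum_(i < size s) w i * (nth x s i).2.

Definition in_interior_conv_hull (s : seq pt) (x : pt) : Prop :=
  exists e : R, 0 < e /\ forall y : pt, enorm (psub y x) < e -> in_conv_hull s y.

Definition convex_polygon (s : seq pt) : Prop :=
  uniq s /\
  (exists a b c, [/\ a \in s, b \in s, c \in s & cross (psub b a) (psub c a) != 0]) /\
  (forall P, P \in s -> ~ in_conv_hull (rem P s) P).

Definition loc_max_distant (s : seq pt) (Q Qbar : pt) (delta : R) : Prop :=
  forall A : pt, enorm (psub A Qbar) < delta -> in_interior_conv_hull s A ->
    enorm A < enorm Q.

End Plane.

(* With c := delta |Q| / r > delta, the angle condition says that every vertex P
   satisfies the cone condition c |Q - P| <= <Q, Q - P>.  Both sides are compatible
   with convex combinations (the left one by Cauchy-Schwarz), so the condition holds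
   for every point A of the hull.  Then
   |Q|^2 - |A|^2 = 2 <Q, Q - A> - |Q - A|^2 >= |Q - A| (2c - |Q - A|) > 0,
   because |Q - A| < 2 delta < 2c.  The case A = Q cannot occur: the points
   Q + tQ, which lie in the hull if Q is interior, violate the cone condition. *)
From mathcomp Require Import all_boot all_order all_algebra.
From mathcomp Require Import reals.
From mathcomp Require Import ring lra.
Set Implicit Arguments. Unset Strict Implicit.
Import Order.TTheory GRing.Theory Num.Theory.
Local Open Scope ring_scope.

Section EuclideanPlane.
Variable R : realType.
Implicit Types p q u x : pt R.

Lemma enorm_ge0 p : 0 <= enorm p.
Proof. exact: sqrtr_ge0. Qed.

Lemma enorm_sq p : enorm p ^+ 2 = dot p p.
Proof. by rewrite /enorm sqr_sqrtr // /dot; nra. Qed.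

Lemma enorm_lt p (e : R) : 0 < e -> dot p p < e ^+ 2 -> enorm p < e.
Proof. move=> e_gt0; rewrite -enorm_sq; have := enorm_ge0 p; nra. Qed.

Lemma enorm_psubb p : enorm (psub p p) = 0.
Proof. by rewrite /enorm /psub /dot !subrr mulr0 addr0 sqrtr0. Qed.

Lemma dot_psubb u p : dot u (psub p p) = 0.
Proof. by rewrite /dot /psub !subrr !mulr0 addr0. Qed.

Lemma enorm_psub_gt0 p q : p != q -> 0 < enorm (psub p q).
Proof.
case: p q => [a b] [a' b'] neq_pq; rewrite lt_def enorm_ge0 andbT.
apply: contra neq_pq => /eqP d0.
have := enorm_sq (psub (a, b) (a', b')).
rewrite d0 expr0n /dot /psub /= -!expr2 => /esym/eqP.
by rewrite paddr_eq0 ?sqr_ge0 // !sqrf_eq0 !subr_eq0 xpair_eqE.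
Qed.

Lemma dot_le_enorm p q : dot p q <= enorm p * enorm q.
Proof.
have lagrange : dot p p * dot q q - dot p q ^+ 2 = cross p q ^+ 2.
  by rewrite /dot /cross; ring.
have sq_le : dot p q ^+ 2 <= (enorm p * enorm q) ^+ 2.
  by rewrite exprMn !enorm_sq -subr_ge0 lagrange sqr_ge0.
have := mulr_ge0 (enorm_ge0 p) (enorm_ge0 q); nra.
Qed.

Lemma enorm_psub_triangle p q x :
  enorm (psub p q) <= enorm (psub p x) + enorm (psub q x).
Proof.
set a := psub p x; set b := psub q x.
have expand : dot (psub p q) (psub p q) = dot a a - 2 * dot a b + dot b b.
  by rewrite /a /b /dot /psub /=; ring.
have cs : - dot a b <= enorm a * enorm b.
  have -> : - dot a b = dot a (- b.1, - b.2) by rewrite /dot /=; ring.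
  have -> : enorm b = enorm (- b.1, - b.2).
    by rewrite /enorm /dot /=; congr Num.sqrt; ring.
  exact: dot_le_enorm.
have := enorm_sq (psub p q); have := enorm_sq a; have := enorm_sq b.
have := enorm_ge0 (psub p q); have := enorm_ge0 a; have := enorm_ge0 b.
nra.
Qed.

Lemma dot_psub_conv (s : seq (pt R)) (w : nat -> R) u q x :
  \sum_(i < size s) w i = 1 ->
  x.1 = \sum_(i < size s) w i * (nth x s i).1 ->
  x.2 = \sum_(i < size s) w i * (nth x s i).2 ->
  dot u (psub q x) = \sum_(i < size s) w i * dot u (psub q (nth x s i)).
Proof.
move=> w_sum1 x1 x2.
rewrite (eq_bigr (fun i : 'I_(size s) => dot u q * w i
    - u.1 * (w i * (nth x s i).1) - u.2 * (w i * (nth x s i).2))); last first.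
  by move=> i _; rewrite /dot /psub /=; ring.
by rewrite !sumrB -!mulr_sumr w_sum1 -x1 -x2 /dot /psub /=; ring.
Qed.

Section Cone.
Variables (s : seq (pt R)) (q u : pt R) (c : R).
Hypothesis c_ge0 : 0 <= c.
Hypothesis cone_vertices :
  forall P, P \in s -> c * enorm (psub q P) <= dot u (psub q P).

Lemma in_conv_hull_cone y :
  in_conv_hull s y -> c * enorm (psub q y) <= dot u (psub q y).
Proof.
move=> [w [w_ge0 [w_sum1 [y1 y2]]]].
set S := \sum_(i < size s) w i * enorm (psub q (nth y s i)).
have S_ge0 : 0 <= S.
  by apply: sumr_ge0 => i _; rewrite mulr_ge0 ?w_ge0 ?enorm_ge0.
have cS_le : c * S <= dot u (psub q y).
  rewrite (dot_psub_conv _ _ w_sum1 y1 y2) mulr_sumr; apply: ler_sum => i _.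
  by rewrite mulrCA ler_wpM2l ?w_ge0 ?cone_vertices ?mem_nth.
(* Cauchy-Schwarz termwise on the expansion of |q - y|^2 yields |q - y| <= S. *)
have d2_le : enorm (psub q y) ^+ 2 <= enorm (psub q y) * S.
  rewrite enorm_sq (dot_psub_conv _ _ w_sum1 y1 y2) mulr_sumr.
  apply: ler_sum => i _.
  by rewrite mulrCA ler_wpM2l ?w_ge0 ?dot_le_enorm.
have [d0 | d_neq0] := eqVneq (enorm (psub q y)) 0.
  by rewrite d0 mulr0 (le_trans _ cS_le) ?mulr_ge0.
have d_gt0 : 0 < enorm (psub q y) by rewrite lt_def d_neq0 enorm_ge0.
have d_le : enorm (psub q y) <= S by rewrite -(ler_pM2l d_gt0) -expr2.
exact: le_trans (ler_wpM2l c_ge0 d_le) cS_le.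
Qed.

Lemma cone_apex_notin_interior :
  0 < enorm u -> ~ in_interior_conv_hull s q.
Proof.
move=> u_gt0 [e [e_gt0 near_in_hull]].
pose t := e / (2 * enorm u).
have t_gt0 : 0 < t by rewrite divr_gt0 ?mulr_gt0.
pose y : pt R := (q.1 + t * u.1, q.2 + t * u.2).
have y_near : enorm (psub y q) < e.
  apply: enorm_lt => //.
  have -> : dot (psub y q) (psub y q) = (t * enorm u) ^+ 2.
    by rewrite exprMn enorm_sq /dot /psub /=; ring.
  rewrite /t mulrAC -mulf_div divff ?gt_eqF // mulr1.
  nra.
have := in_conv_hull_cone (near_in_hull y y_near).
have -> : dot u (psub q y) = - (t * enorm u ^+ 2).
  by rewrite enorm_sq /dot /psub /y /=; ring.
have := mulr_ge0 c_ge0 (enorm_ge0 (psub q y)).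
have := mulr_gt0 t_gt0 (exprn_gt0 2 u_gt0).
lra.
Qed.

End Cone.

Lemma enorm_lt_of_cone (q a : pt R) (c : R) :
  0 < enorm (psub q a) < 2 * c ->
  c * enorm (psub q a) <= dot q (psub q a) -> enorm a < enorm q.
Proof.
move=> /andP [d_gt0 d_lt] cone_a.
have gap : dot q q - dot a a = 2 * dot q (psub q a) - enorm (psub q a) ^+ 2.
  by rewrite enorm_sq /dot /psub /=; ring.
rewrite -!enorm_sq in gap.
have := enorm_ge0 a; have := enorm_ge0 q.
nra.
Qed.

End EuclideanPlane.

Theorem lemma5p12 (R : realType) (s : seq (pt R)) (Q Qbar : pt R) (delta r : R) :
  convex_polygon s -> Q \in s ->
  0 < delta -> enorm (psub Q Qbar) < delta ->
  0 < r -> r < enorm Q ->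
  (forall P, P \in s -> P != Q ->
     delta / r <= dot Q (psub Q P) / (enorm Q * enorm (psub Q P))) ->
  loc_max_distant s Q Qbar delta.
Proof.
move=> _ _ delta_gt0 Q_near r_gt0 r_lt angle A A_near [e [e_gt0 A_interior]].
have Q_gt0 : 0 < enorm Q by apply: lt_trans r_lt.
pose c := delta / r * enorm Q.
have delta_lt_c : delta < c by rewrite /c mulrAC ltr_pdivlMr // ltr_pM2l.
have c_ge0 : 0 <= c by rewrite ltW ?(lt_trans delta_gt0).
have cone : forall P, P \in s -> c * enorm (psub Q P) <= dot Q (psub Q P).
  move=> P Ps; have [-> | PQ] := eqVneq P Q.
    by rewrite enorm_psubb dot_psubb mulr0.
  have QP_gt0 : 0 < enorm (psub Q P) by rewrite enorm_psub_gt0 // eq_sym.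
  by rewrite -mulrA -ler_pdivlMr ?mulr_gt0 ?angle.
have A_hull : in_conv_hull s A by apply: A_interior; rewrite enorm_psubb.
have AQ : A != Q.
  apply/eqP => AQ; subst A.
  by apply: (cone_apex_notin_interior c_ge0 cone Q_gt0); exists e.
have QA_gt0 : 0 < enorm (psub Q A) by apply: enorm_psub_gt0; rewrite eq_sym.
apply: (enorm_lt_of_cone (c := c)); last exact: (in_conv_hull_cone c_ge0 cone A_hull).
rewrite QA_gt0 (le_lt_trans (enorm_psub_triangle Q A Qbar)) //.
by rewrite (lt_trans (ltrD Q_near A_near)) // mulr_natl mulr2n ltrD.
Qed.
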